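(* Let $\Sigma,\Gamma$ be finite alphabets, each with at least two letters. For every infinite word $w\in\Sigma^{\mathbb{N}}$, $\mathrm{ACE}_{\mathcal{I}}(w) \le \mathrm{ACE}'_{\mathcal{I}}(w)$.
   Context: $\mathrm{Fact}_n(w)$ is the set of length-$n$ factors of $w$. For a nonempty word $v$ and integer $p\ge0$, $v^{p/|v|}$ is the prefix of length $p$ of $vvv\cdots$. For a nonempty finite word $u$, $\mathrm{E}(u) = \sup\{ r \in \mathbb{Q} : u = v^r \text{ for some nonempty } v\}$. $\mathcal{I}$ is the set of injective morphisms $\Sigma^*\to\Gamma^*$; for a finite nonempty word $u\in\Sigma^+$, $\mathrm{E}_{\mathcal{I}}(u) = \sup\{\mathrm{E}(h(u)) : h\in\mathcal{I}\}$. For an infinite word $w$, $\mathrm{ACE}(w) = \limsup_{n\to\infty}\sup\{\mathrm{E}(u) : u\in\mathrm{Fact}_n(w)\}$, $\mathrm{ACE}_{\mathcal{I}}(w) = \sup\{\mathrm{ACE}(h(w)) : h\in\mathcal{I}\}$, and $\mathrm{ACE}'_{\mathcal{I}}(w) = \limsup_{n\to\infty}\sup\{\mathrm{E}_{\mathcal{I}}(u) : u\in\mathrm{Fact}_n(w)\}$. *)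

From HB Require Import structures.
From mathcomp Require Import all_boot all_order all_algebra.
From mathcomp Require Import all_classical all_reals all_analysis.
Set Implicit Arguments. Unset Strict Implicit. Unset Printing Implicit Defensive.
Import Order.TTheory GRing.Theory Num.Theory.
Local Open Scope classical_set_scope.
Local Open Scope ring_scope.

Definition FactInf (T : Type) (w : nat -> T) (n : nat) : set (seq T) :=
  [set u | exists k, u = [seq w i | i <- iota k n]].

(* v^{p/|v|}: the prefix of length p of v v v ... (for v nonempty). *)
Definition rpow (T : Type) (v : seq T) (p : nat) : seq T :=
  take p (flatten (nseq p v)).

Definition Exp (R : realType) (T : eqType) (u : seq T) : \bar R :=
  ereal_sup [set ((ratr r)%:E : \bar R) | r in
    [set r : rat | exists v : seq T, v != [::] /\
        exists p : nat, r = p%:R / (size v)%:R /\ u = rpow v p]].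

Definition morph (S G : Type) (f : S -> seq G) (u : seq S) : seq G :=
  flatten (map f u).

Definition Inj (S G : Type) : set (S -> seq G) :=
  [set f | injective (morph f)].

Definition ExpI (R : realType) (S G : eqType) (u : seq S) : \bar R :=
  ereal_sup [set Exp R (morph f u) | f in @Inj S G].

(* Fact_n(h(w)) for the infinite word h(w) (all letter images are nonempty
   when h is injective, so h(w) is the limit of the images of the prefixes
   of w; its factors are exactly the factors of the h(prefix)'s). *)
Definition FactMorph (S G : eqType) (f : S -> seq G) (w : nat -> S) (n : nat)
  : set (seq G) :=
  [set x | size x = n /\ exists m, infix x (morph f [seq w i | i <- iota 0 m])].

Definition ACEmorph (R : realType) (S G : eqType) (f : S -> seq G)
  (w : nat -> S) : \bar R :=
  limn_esup (fun n => ereal_sup [set Exp R u | u in FactMorph f w n]).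

Definition ACE_I (R : realType) (S G : eqType) (w : nat -> S) : \bar R :=
  ereal_sup [set ACEmorph R f w | f in @Inj S G].

Definition ACE'_I (R : realType) (S G : eqType) (w : nat -> S) : \bar R :=
  limn_esup (fun n => ereal_sup [set ExpI R G u | u in FactInf w n]).

From Pilot Require Import Defs.
From mathcomp Require Import all_boot all_order all_algebra.
From mathcomp Require Import all_classical all_reals all_analysis.
From mathcomp Require Import lra zify.
Set Implicit Arguments. Unset Strict Implicit. Unset Printing Implicit Defensive.
Import Order.TTheory GRing.Theory Num.Theory.

(* Fix an injective morphism h whose letter images have length at most L.  A
   long factor x of h(w) is y h(u) z with u a factor of w and |y|, |z| <= L.
   If x has period q then so does its factor h(u), hence |h(u)|/q <= E(h(u))
   <= E_I(u), and |u| is as large as we wish when |x| is.  Since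
   |x|/q <= |h(u)|/q + 2L/q and q grows with |x| (q >= |h(u)|/E_I(u)), the
   exponents of the long factors of h(w) are eventually below any bound
   exceeding the exponents E_I of the long factors of w. *)

Lemma cat_eq_cat_split (T : Type) (a b c d : seq T) :
  a ++ b = c ++ d -> size a <= size c ->
  c = a ++ drop (size a) c /\ b = drop (size a) c ++ d.
Proof.
move=> E le_ac.
have take_c : take (size a) c = a.
  by have := congr1 (take (size a)) E; rewrite take_size_cat // takel_cat.
have Ec : c = a ++ drop (size a) c by rewrite -{1}(cat_take_drop (size a) c) take_c.
split=> //.
by move: E; rewrite {1}Ec -catA => /(congr1 (drop (size a))); rewrite !drop_size_cat.
Qed.

Lemma map_iota_cat3 (T : Type) (w : nat -> T) m u1 u2 u3 :
  [seq w i | i <- iota 0 m] = u1 ++ u2 ++ u3 ->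
  u2 = [seq w i | i <- iota (size u1) (size u2)].
Proof.
move=> E.
have Em : m = size u1 + size u2 + size u3.
  by have := congr1 size E; rewrite size_map size_iota !size_cat addnA.
have Eu2 : u2 = take (size u2) (drop (size u1) (u1 ++ u2 ++ u3)).
  by rewrite drop_size_cat // take_size_cat.
rewrite {1}Eu2 -E -map_drop -map_take drop_iota take_iota add0n Em.
by congr (map w (iota _ _)); lia.
Qed.

Section Morph.
Variables (S G : Type) (f : S -> seq G) (L : nat).
Hypothesis size_f_le : forall a, size (f a) <= L.

Lemma size_morph_le u : size (morph f u) <= L * size u.
Proof. by elim: u => //= a u IH; rewrite size_cat mulnS leq_add. Qed.

Lemma morph_suffix u y x : morph f u = y ++ x ->
  exists u1 u2 y', [/\ u = u1 ++ u2, x = y' ++ morph f u2 & size y' <= L].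
Proof.
elim: u y => [|a u IH] y /=.
  by case: y => //; case: x => // _; exists [::], [::], [::].
move=> E; have [le_ay|lt_ya] := leqP (size (f a)) (size y).
  have [_ Eu] := cat_eq_cat_split E le_ay.
  have [u1 [u2 [y' [-> -> le_y'L]]]] := IH _ Eu.
  by exists (a :: u1), u2, y'.
have [Ea ->] := cat_eq_cat_split (esym E) (ltnW lt_ya).
exists [:: a], u, (drop (size y) (f a)); split=> //.
by rewrite size_drop (leq_trans (leq_subr _ _)).
Qed.

Lemma morph_prefix u x z : morph f u = x ++ z ->
  exists u1 u2 z', [/\ u = u1 ++ u2, x = morph f u1 ++ z' & size z' <= L].
Proof.
elim: u x => [|a u IH] x /=.
  by case: x => //; case: z => // _; exists [::], [::], [::].
move=> E; have [le_xa|lt_ax] := leqP (size x) (size (f a)).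
  by exists [::], (a :: u), x; split=> //; apply: leq_trans le_xa _.
have [Ex Eu] := cat_eq_cat_split E (ltnW lt_ax).
have [u1 [u2 [z' [-> Ex' le_z'L]]]] := IH _ Eu.
exists (a :: u1), u2, z'; split=> //.
by rewrite Ex Ex' /morph /= catA.
Qed.

Lemma morph_infix u y x z : morph f u = y ++ x ++ z -> L <= size x ->
  exists u1 u2 u3 y' z', [/\ u = u1 ++ u2 ++ u3, x = y' ++ morph f u2 ++ z',
    size y' <= L & size z' <= L].
Proof.
move=> E le_Lx.
have [u1 [u' [y' [-> E' le_y'L]]]] := morph_suffix E.
have [Ex Eu'] := cat_eq_cat_split (esym E') (leq_trans le_y'L le_Lx).
have [u2 [u3 [z' [-> Ex' le_z'L]]]] := morph_prefix Eu'.
exists u1, u2, u3, y', z'; split=> //.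
by rewrite Ex Ex' catA.
Qed.

End Morph.

Lemma FactMorph_decomp (S G : eqType) (f : S -> seq G) L (w : nat -> S) n x :
  (forall a, size (f a) <= L) -> FactMorph f w n x -> L <= n ->
  exists u y z, [/\ FactInf w (size u) u, x = y ++ morph f u ++ z,
    size y <= L & size z <= L].
Proof.
move=> size_f_le [<- [m /infixP [y0 [z0 E]]]] le_Lx.
have [u1 [u [u3 [y [z [Ew -> le_yL le_zL]]]]]] := morph_infix size_f_le E le_Lx.
exists u, y, z; split=> //.
by exists (size u1); apply: map_iota_cat3 Ew.
Qed.

Section Period.
Variable T : Type.

Definition has_period (q : nat) (x : seq T) :=
  exists v : seq T, size v = q /\ x = rpow v (size x).

Lemma size_flatten_nseq (v : seq T) k : size (flatten (nseq k v)) = k * size v.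
Proof. by elim: k => //= k IH; rewrite size_cat IH mulSn. Qed.

Lemma nth_flatten_nseq (d : T) v k i : i < k * size v ->
  nth d (flatten (nseq k v)) i = nth d v (i %% size v).
Proof.
elim: k i => [|k IH] i /=; first by rewrite mul0n.
rewrite mulSn nth_cat => lt_i.
case: ltnP => le_vi; first by rewrite modn_small.
rewrite IH; last by rewrite ltn_subLR.
by rewrite -{2}(subnK le_vi) modnDr.
Qed.

Lemma size_rpow (v : seq T) p : 0 < size v -> size (rpow v p) = p.
Proof. by move=> v_gt0; rewrite /rpow size_takel // size_flatten_nseq leq_pmulr. Qed.

Lemma nth_rpow (d : T) v p i : 0 < size v -> i < p ->
  nth d (rpow v p) i = nth d v (i %% size v).
Proof.
move=> v_gt0 lt_ip; rewrite /rpow nth_take // nth_flatten_nseq //.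
by rewrite (leq_trans lt_ip) // leq_pmulr.
Qed.

(* The period of the factor is the rotation of v by |y| (mod |v|). *)
Lemma has_period_infix q y z y' : 0 < q ->
  has_period q (y ++ z ++ y') -> has_period q z.
Proof.
move=> q_gt0 [[|d v] [sv E]]; first by rewrite -sv in q_gt0.
pose v' := [seq nth d (d :: v) ((i + size y) %% q) | i <- iota 0 q].
exists v'; have sv' : size v' = q by rewrite size_map size_iota.
split=> //; apply: (@eq_from_nth _ d); first by rewrite size_rpow ?sv'.
move=> i lt_iz; rewrite nth_rpow ?sv' // (nth_map 0) ?size_iota ?ltn_pmod //.
rewrite nth_iota ?ltn_pmod // add0n modnDml.
have := congr1 (fun s => nth d s (size y + i)) E => /=.
rewrite nth_rpow ?sv //; last by rewrite !size_cat ltn_add2l ltn_addr.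
by rewrite nth_cat ltnNge leq_addr /= addKn nth_cat lt_iz addnC.
Qed.

End Period.

Section Exponent.
Variables (R : realType) (T : eqType).
Local Open Scope ereal_scope.

Lemma le_Exp_period q (x : seq T) : (0 < q)%N -> has_period q x ->
  ((size x)%:R / q%:R)%:E <= Exp R x.
Proof.
move=> q_gt0 [v [sv xE]]; apply: ereal_sup_ubound.
exists ((size x)%:R / q%:R : rat)%R; last by rewrite fmorph_div !rmorph_nat.
exists v; split; first by rewrite -size_eq0 sv -lt0n.
by exists (size x); rewrite sv.
Qed.

Lemma Exp_le_period (x : seq T) b :
  (forall q, (0 < q)%N -> has_period q x -> ((size x)%:R / q%:R)%:E <= b) ->
  Exp R x <= b.
Proof.
move=> le_b; apply: ge_ereal_sup => _ [r [v [v_neq0 [p [-> xE]]]] <-].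
have v_gt0 : (0 < size v)%N by rewrite lt0n size_eq0.
have Ep : p = size x by rewrite xE size_rpow.
rewrite fmorph_div !rmorph_nat Ep; apply: le_b => //.
by exists v; rewrite -Ep.
Qed.

End Exponent.

Section PeriodBound.
Local Open Scope ring_scope.

(* [k <= h <= t q] and [c s < k (s - t)] force the slack [c] below [(s - t) q]. *)
Lemma ler_period_bound (R : realFieldType) (n h q c k t s : R) :
  0 < q -> 0 <= c -> 0 <= k -> h <= t * q -> n <= h + c -> c + k <= n ->
  c * s < k * (s - t) -> t < s -> n <= s * q.
Proof.
move=> q_gt0 c_ge0 k_ge0 le_htq le_nhc le_ckn lt_cs lt_ts.
have le_ktq : k <= t * q by lra.
have t_ge0 : 0 <= t by rewrite -(pmulr_lge0 _ q_gt0); lra.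
have t_gt0 : 0 < t.
  rewrite lt_def t_ge0 andbT; apply/eqP => t0.
  by move: lt_cs le_ktq; rewrite t0 mul0r subr0 => ? ?; nra.
have : c * t < t * ((s - t) * q) by nra.
rewrite mulrC ltr_pM2l // => lt_c.
lra.
Qed.

End PeriodBound.

Section Limsup.
Variable R : realType.
Local Open Scope ereal_scope.

Lemma lee_real_ub (x y : \bar R) : (forall s : R, y < s%:E -> x <= s%:E) -> x <= y.
Proof.
case: y => [t||] Hx.
- by apply/lee_addgt0Pr => e e_gt0; apply: Hx; rewrite lte_fin ltrDl.
- exact: leey.
- by rewrite (eq_ninfty (fun r => Hx r (ltNyr r))).
Qed.

Lemma lte_real_between (x : \bar R) (s : R) : x < s%:E ->
  exists2 t : R, x <= t%:E & (t < s)%R.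
Proof.
case: x => [t||] //; first by rewrite lte_fin; exists t.
by exists (s - 1)%R; [exact: leNye | rewrite gtrDl].
Qed.

Lemma limn_esup_le (u v : (\bar R)^nat) :
  (forall M (s : R), esups v M < s%:E -> exists N, esups u N <= s%:E) ->
  limn_esup u <= limn_esup v.
Proof.
have limn_esupE a : limn_esup a = ereal_inf (range (esups a)).
  by rewrite limn_esup_lim; apply/cvg_lim => //; exact: cvg_esups_inf.
move=> Huv; rewrite !limn_esupE; apply: le_ereal_inf_tmp => _ [M _ <-].
apply: lee_real_ub => s /Huv [N le_uN].
by apply: le_trans le_uN; apply: ereal_inf_lbound; exists N.
Qed.

End Limsup.

Local Open Scope ereal_scope.

Lemma Exp_FactMorph_le (R : realType) (S G : eqType) (w : nat -> S)
  (f : S -> seq G) L M (t s : R) : Defs.Inj f ->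
  (forall a, size (f a) <= L)%N -> (0 < L)%N -> (t < s)%R ->
  (forall u, (M <= size u)%N -> FactInf w (size u) u -> ExpI R G u <= t%:E) ->
  exists N, forall n x, (N <= n)%N -> FactMorph f w n x -> Exp R x <= s%:E.
Proof.
move=> fI size_f_le L_gt0 lt_ts ExpI_le.
pose K := (Num.truncn ((2 * L)%:R * s / (s - t))%R).+1.
exists (L * M + 2 * L + K)%N => n x le_Nn xF.
have [u [y [z [uF Ex le_yL le_zL]]]] := FactMorph_decomp size_f_le xF ltac:(lia).
have size_hu : (size (morph f u) <= n <= size (morph f u) + 2 * L)%N.
  by case: xF => <- _; rewrite Ex !size_cat; lia.
have le_Mu : (M <= size u)%N.
  rewrite -(leq_pmul2l L_gt0); apply: leq_trans (size_morph_le size_f_le u); lia.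
case: xF => size_x _.
apply: Exp_le_period => q q_gt0; rewrite Ex => /(has_period_infix q_gt0) hu_per.
have le_hu_t : ((size (morph f u))%:R / q%:R)%:E <= t%:E.
  apply: le_trans (le_Exp_period R q_gt0 hu_per) _.
  apply: le_trans (ExpI_le _ le_Mu uF).
  by apply: ereal_sup_ubound; exists f.
have q_gt0' : (0 < q%:R :> R)%R by rewrite ltr0n.
rewrite lee_fin ler_pdivrMr // in le_hu_t.
rewrite -Ex size_x lee_fin ler_pdivrMr //.
apply: (@ler_period_bound _ n%:R (size (morph f u))%:R _ (2 * L)%:R K%:R t) => //.
- by rewrite -natrD ler_nat; lia.
- by rewrite -natrD ler_nat; lia.
- rewrite -ltr_pdivrMr ?subr_gt0 //.
  exact/real_truncnS_gt/num_real.
Qed.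

Theorem corollary21 (R : realType) (Sigma Gamma : finType)
  (hSigma : (1 < #|Sigma|)%N) (hGamma : (1 < #|Gamma|)%N)
  (w : nat -> Sigma) :
  ACE_I R Gamma w <= ACE'_I R Gamma w.
Proof.
apply: ge_ereal_sup => _ [f fI <-].
apply: limn_esup_le => M s /lte_real_between [t le_Mt lt_ts].
pose L := (\max_(a : Sigma) size (f a)).+1.
have size_f_le a : (size (f a) <= L)%N by apply/leqW/leq_bigmax.
have ExpI_le u : (M <= size u)%N -> FactInf w (size u) u -> ExpI R Gamma u <= t%:E.
  move=> le_Mu uF; apply: le_trans le_Mt.
  apply: le_trans (ereal_sup_ubound _) (ereal_sup_ubound _); last by exists (size u).
  by exists u.
have [N Exp_le] := Exp_FactMorph_le fI size_f_le (ltn0Sn _) lt_ts ExpI_le.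
exists N; apply: ge_ereal_sup => _ [n /= le_Nn <-].
by apply: ge_ereal_sup => _ [x xF <-]; apply: Exp_le le_Nn xF.
Qed.
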